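(* Consider a finite reward-free MDP with occupancy polytope $\Phi$. Let $\mathcal D=\{(d_e^k,\epsilon^k)\}_{k=1}^K$ with $d_e^k\in\Phi$, $\epsilon^k\ge0$, let $d_e'\in\Phi$, $\epsilon'\ge0$, and $\mathcal D^+:=\mathcal D\cup\{(d_e',\epsilon')\}$. Let $\mathcal R^\star\subseteq\Delta(S\times A)$ be the ground-truth reward set and suppose the consistency assumption holds for $\mathcal D$ and $\mathcal D^+$, i.e. $\mathcal R^\star\subseteq\mathcal R(\mathcal D)$ and $\mathcal R^\star\subseteq\mathcal R(\mathcal D^+)$. Then \[\mathcal R^\star\subseteq\mathcal R(\mathcal D^+)\subsetneq\mathcal R(\mathcal D)\quad\text{if and only if}\quad \epsilon'<\max_{r\in\mathcal R(\mathcal D)}\mathrm{subopt}(r,d_e').\]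
   Context: The MDP has finite $S$, $A$, transitions $P$, initial distribution $\mu_0$, discount $\gamma\in(0,1)$; $(Md)(s)=\sum_a d(s,a)-\gamma\sum_{s',a'}P(s\mid s',a')d(s',a')$ and $\Phi=\{d\ge0:Md=(1-\gamma)\mu_0\}$. Rewards are $r\in\Delta(S\times A)$. $\mathrm{subopt}(r,d):=\max_{\tilde d\in\Phi}r^\top\tilde d-r^\top d$. For a dataset $\mathcal D=\{(d_e^k,\epsilon^k)\}_k$, $\mathcal R(\mathcal D):=\{r\in\Delta(S\times A):\mathrm{subopt}(r,d_e^k)\le\epsilon^k\ \forall k\}$. *)

From HB Require Import structures.
From mathcomp Require Import all_boot all_order all_algebra.
From mathcomp Require Import all_classical all_reals.
Set Implicit Arguments. Unset Strict Implicit. Unset Printing Implicit Defensive.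
Import Order.TTheory GRing.Theory Num.Theory.
Local Open Scope classical_set_scope.
Local Open Scope ring_scope.

Section MDP.
Variables (R : realType) (S A : finType).

(* Transition kernel: P s s' a = P(s | s', a).  Occupancy measures and
   rewards are finite functions on S * A. *)
Definition Mop (P : S -> S -> A -> R) (gamma : R) (d : {ffun S * A -> R}) (s : S) : R :=
  \sum_(a : A) d (s, a) - gamma * \sum_(p : S * A) P s p.1 p.2 * d p.

Definition Phi (P : S -> S -> A -> R) (mu0 : S -> R) (gamma : R) : set {ffun S * A -> R} :=
  [set d : {ffun S * A -> R} | (forall p, 0 <= d p) /\ forall s, Mop P gamma d s = (1 - gamma) * mu0 s].

Definition simplex : set {ffun S * A -> R} :=
  [set r : {ffun S * A -> R} | (forall p, 0 <= r p) /\ \sum_(p : S * A) r p = 1].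

Definition value (r d : {ffun S * A -> R}) : R := \sum_(p : S * A) r p * d p.

Definition subopt P mu0 gamma (r d : {ffun S * A -> R}) : R :=
  sup [set value r dt | dt in Phi P mu0 gamma] - value r d.

Definition feasible P mu0 gamma (D : seq ({ffun S * A -> R} * R)) : set {ffun S * A -> R} :=
  [set r : {ffun S * A -> R} | simplex r /\ forall x, x \in D -> subopt P mu0 gamma r x.1 <= x.2].

End MDP.

(** The constraint added by [(de', eps')] removes exactly the rewards [r] of
    [R(D)] with [eps' < subopt r de'], so [R(D+)] is a proper subset of [R(D)]
    iff some such [r] exists.  Since [subopt r de' <= 1] on the simplex, the
    suboptimalities over [R(D)] are bounded, and such an [r] exists iff
    [eps'] lies below their supremum. *)

From HB Require Import structures.
From mathcomp Require Import all_boot all_order all_algebra.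
From mathcomp Require Import all_classical all_reals.
Import Order.TTheory GRing.Theory Num.Theory.
Local Open Scope classical_set_scope.
Local Open Scope ring_scope.

(* [0 <= l] excludes an empty [A], whose image has supremum [sup set0 = 0]. *)
Lemma lt_sup_image (R : realType) (T : Type) (A : set T) (f : T -> R) (l : R) :
  0 <= l -> (exists M, forall t, A t -> f t <= M) ->
  l < sup (f @` A) <-> exists2 t, A t & l < f t.
Proof.
move=> l_ge0 [M fM]; split=> [l_lt_sup | [t At l_lt_ft]].
- have fA_neq0 : f @` A !=set0.
    apply/set0P/negP => /eqP fA0.
    by move: l_lt_sup; rewrite fA0 sup0 ltNge l_ge0.
  by have [_ [t At <-] l_lt_ft] := sup_gt fA_neq0 l_lt_sup; exists t.
- apply: (lt_le_trans l_lt_ft); apply: ub_le_sup; last by exists t.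
  by exists M => _ [u Au <-]; apply: fM.
Qed.

Section Occupancy.
Context {R : realType} {S A : finType}.
Context {P : S -> S -> A -> R} {mu0 : S -> R} {gamma : R}.
Hypothesis P_stochastic : forall s' a, \sum_(s : S) P s s' a = 1.
Hypothesis mu0_mass : \sum_(s : S) mu0 s = 1.
Hypothesis gamma_neq1 : gamma != 1.

(* Summing the flow constraint over [s] gives [(1 - gamma) * mass d = 1 - gamma]. *)
Lemma Phi_mass d : Phi P mu0 gamma d -> \sum_p d p = 1.
Proof.
move=> [_ flow].
have mass_pair : \sum_(s : S) \sum_(a : A) d (s, a) = \sum_p d p.
  by rewrite pair_bigA; apply: eq_bigr => -[].
have mass_next : \sum_(p : S * A) \sum_(s : S) P s p.1 p.2 * d p = \sum_p d p.
  by apply: eq_bigr => p _; rewrite -mulr_suml P_stochastic mul1r.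
have : \sum_s Mop P gamma d s = \sum_s (1 - gamma) * mu0 s.
  by apply: eq_bigr => s _; rewrite flow.
rewrite -mulr_sumr mu0_mass mulr1 /Mop sumrB -mulr_sumr mass_pair.
rewrite exchange_big /= mass_next => mass_eq.
have : (1 - gamma) * \sum_p d p = (1 - gamma) * 1.
  by rewrite mulrBl mul1r mulr1 mass_eq.
by move/mulfI; apply; rewrite subr_eq0 eq_sym.
Qed.

Lemma value_Phi_le1 r d : simplex r -> Phi P mu0 gamma d -> value r d <= 1.
Proof.
move=> [r_ge0 r_mass] Phi_d; rewrite -(Phi_mass _ Phi_d) /value.
apply: ler_sum => p _; rewrite ler_piMl //; first by case: Phi_d.
by rewrite -r_mass (bigD1 p) //= lerDl sumr_ge0.
Qed.

Lemma subopt_le1 r d : simplex r -> Phi P mu0 gamma d -> subopt P mu0 gamma r d <= 1.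
Proof.
move=> simplex_r Phi_d.
have value_ge0 : 0 <= value r d.
  by apply: sumr_ge0 => p _; apply: mulr_ge0; [case: simplex_r | case: Phi_d].
rewrite /subopt -[X in _ <= X]subr0 lerB //.
apply: ge_sup; first by exists (value r d), d.
by move=> _ [dt Phi_dt <-]; apply: value_Phi_le1.
Qed.

End Occupancy.

Section Feasible.
Context {R : realType} {S A : finType}.
Context {P : S -> S -> A -> R} {mu0 : S -> R} {gamma : R}.

Lemma feasible_cons_proper (D : seq ({ffun S * A -> R} * R)) de eps :
  feasible P mu0 gamma ((de, eps) :: D) `<` feasible P mu0 gamma D <->
  exists2 r, feasible P mu0 gamma D r & eps < subopt P mu0 gamma r de.
Proof.
have cons_sub : feasible P mu0 gamma ((de, eps) :: D) `<=` feasible P mu0 gamma D.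
  by move=> r [simplex_r le_eps]; split=> // x xD; apply: le_eps; rewrite in_cons xD orbT.
split=> [[_ not_sub] | [r [simplex_r le_eps] lt_subopt]].
- apply: contra_notP not_sub => no_r r feas_r; split; first by case: feas_r.
  move=> x; rewrite in_cons => /orP[/eqP -> /= | xD]; last by case: feas_r => _; apply.
  by rewrite leNgt; apply/negP => lt_subopt; apply: no_r; exists r.
- split=> // feas_sub; have [_ /(_ (de, eps))] := feas_sub r (conj simplex_r le_eps).
  by rewrite mem_head leNgt lt_subopt => /(_ isT).
Qed.

End Feasible.

Theorem mainTheorem5 (R : realType) (S A : finType)
  (P : S -> S -> A -> R) (mu0 : S -> R) (gamma : R)
  (D : seq ({ffun S * A -> R} * R)) (de' : {ffun S * A -> R}) (eps' : R)
  (Rstar : set {ffun S * A -> R}) :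
  (forall s s' a, 0 <= P s s' a) ->
  (forall s' a, \sum_(s : S) P s s' a = 1) ->
  (forall s, 0 <= mu0 s) -> \sum_(s : S) mu0 s = 1 ->
  0 < gamma < 1 ->
  (forall x, x \in D -> Phi P mu0 gamma x.1 /\ 0 <= x.2) ->
  Phi P mu0 gamma de' -> 0 <= eps' ->
  Rstar `<=` @simplex R S A ->
  Rstar `<=` feasible P mu0 gamma D ->
  Rstar `<=` feasible P mu0 gamma ((de', eps') :: D) ->
  ((Rstar `<=` feasible P mu0 gamma ((de', eps') :: D)
    /\ feasible P mu0 gamma ((de', eps') :: D) `<` feasible P mu0 gamma D)
   <-> eps' < sup [set subopt P mu0 gamma r de' | r in feasible P mu0 gamma D]).
Proof.
move=> _ P_stochastic _ mu0_mass /andP[_ gamma_lt1] _ Phi_de' eps'_ge0 _ _ Rstar_sub.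
have gamma_neq1 : gamma != 1 by rewrite lt_eqF.
rewrite lt_sup_image //; last first.
  exists 1 => r [simplex_r _].
  exact: subopt_le1 P_stochastic mu0_mass gamma_neq1 r de' simplex_r Phi_de'.
rewrite -feasible_cons_proper.
by split=> [[_ proper] | proper].
Qed.
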